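(* Let $R$ be a ring and let $M$ be a right $R$-module which is an epimorphic image of a right $R$-module that is both projective and injective. Then $M$ is subprojective extension-reflecting; that is, for every short exact sequence of right $R$-modules $0\to A\to B\to C\to 0$, if $M\in \underline{\mathfrak{Pr}}^{-1}(A)\cap \underline{\mathfrak{Pr}}^{-1}(C)$, then $M\in \underline{\mathfrak{Pr}}^{-1}(B)$.
   Context: $R$ is an associative ring with identity and modules are unital right $R$-modules. For right $R$-modules $X$ and $Y$, write $X\in \underline{\mathfrak{Pr}}^{-1}(Y)$ (the subprojectivity domain of $Y$) if $Y$ is $X$-subprojective, meaning: for every epimorphism $g\colon B\to X$ and every homomorphism $f\colon Y\to X$ there exists a homomorphism $h\colon Y\to B$ with $g h=f$. *)

From HB Require Import structures.
From mathcomp Require Import all_boot all_algebra.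
Set Implicit Arguments. Unset Strict Implicit. Unset Printing Implicit Defensive.
Import GRing.Theory.
Local Open Scope ring_scope.

(* Right R-modules are modelled as left modules over the converse ring R^c. *)
Notation rmodType R := (lmodType R^c).

Definition surjective (A B : Type) (f : A -> B) : Prop := forall b, exists a, f a = b.

Definition projective (R : pzRingType) (P : rmodType R) : Prop :=
  forall (B C : rmodType R) (g : {linear B -> C}) (f : {linear P -> C}),
    surjective g -> exists h : {linear P -> B}, forall x, g (h x) = f x.

Definition injective_module (R : pzRingType) (E : rmodType R) : Prop :=
  forall (A B : rmodType R) (i : {linear A -> B}) (f : {linear A -> E}),
    injective i -> exists h : {linear B -> E}, forall x, h (i x) = f x.

(* Y is X-subprojective, i.e. X belongs to the subprojectivity domain of Y. *)
Definition subprojective (R : pzRingType) (Y X : rmodType R) : Prop :=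
  forall (B : rmodType R) (g : {linear B -> X}) (f : {linear Y -> X}),
    surjective g -> exists h : {linear Y -> B}, forall y, g (h y) = f y.

Definition short_exact (R : pzRingType) (A B C : rmodType R)
    (f : {linear A -> B}) (g : {linear B -> C}) : Prop :=
  [/\ injective f, surjective g &
      forall b, g b = 0 <-> exists a, f a = b].

From HB Require Import structures.
From mathcomp Require Import all_boot all_algebra.
Import GRing.Theory.
Local Open Scope ring_scope.

(* Since P is projective, M is in the subprojectivity domain of Y as soon as
   every map Y -> M factors through the epimorphism p : P -> M.  For h : B -> M,
   factor h f through p (M is in the domain of A) and extend the factor along f
   using injectivity of P, obtaining a' : B -> P.  Then h - p a' vanishes on the
   image of f, hence factors through g as some c : C -> M; factoring c through p
   (M is in the domain of C) as d gives h = p (a' + d g). *)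

Section FactorThroughSurjection.
Variables (R : pzRingType) (B C V : lmodType R).
Variables (g : {linear B -> C}) (e : {linear B -> V}).
Hypothesis g_surj : surjective g.
Hypothesis ker_g_sub_ker_e : forall b, g b = 0 -> e b = 0.

Lemma surj_existsb c : exists b, g b == c.
Proof. by have [b <-] := g_surj c; exists b. Qed.

Definition surj_section (c : C) : B := xchoose (surj_existsb c).

Lemma surj_sectionK c : g (surj_section c) = c.
Proof. exact/eqP/(xchooseP (surj_existsb c)). Qed.

Definition surj_factor (c : C) : V := e (surj_section c).

Lemma surj_factorE b : surj_factor (g b) = e b.
Proof.
have : g (surj_section (g b) - b) = 0 by rewrite linearB surj_sectionK subrr.
by move/ker_g_sub_ker_e/eqP; rewrite linearB subr_eq0 => /eqP.
Qed.

Lemma surj_factor_is_linear : linear surj_factor.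
Proof.
move=> r u v.
have -> : r *: u + v = g (r *: surj_section u + surj_section v).
  by rewrite linearP !surj_sectionK.
by rewrite surj_factorE linearP.
Qed.

HB.instance Definition _ :=
  GRing.isLinear.Build R C V *:%R surj_factor surj_factor_is_linear.

Lemma factor_through_surjection :
  exists c : {linear C -> V}, forall b, c (g b) = e b.
Proof. by exists surj_factor => b; apply: surj_factorE. Qed.

End FactorThroughSurjection.

Arguments factor_through_surjection {R B C V} g e.

Lemma subprojective_of_factor_through_projective {R : pzRingType}
    {Y M P : rmodType R} (p : {linear P -> M}) :
  projective P ->
  (forall h : {linear Y -> M}, exists k : {linear Y -> P}, forall y, p (k y) = h y) ->
  subprojective Y M.
Proof.
move=> P_proj factor_p D q h q_surj.
have [l ql] := P_proj D M q p q_surj.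
have [k pk] := factor_p h.
by exists (l \o k) => y /=; rewrite ql pk.
Qed.

Lemma factor_through_injective_cover {R : pzRingType} {M P : rmodType R}
    {p : {linear P -> M}} {A B C : rmodType R}
    {f : {linear A -> B}} {g : {linear B -> C}} :
  surjective p -> injective_module P -> short_exact f g ->
  subprojective A M -> subprojective C M ->
  forall h : {linear B -> M}, exists k : {linear B -> P}, forall b, p (k b) = h b.
Proof.
move=> p_surj P_inj [f_inj g_surj exact_B] SA SC h.
have [a pa] := SA P p (h \o f) p_surj.
have [a' a'f] := P_inj A B f a f_inj.
have [c cg] : exists c : {linear C -> M}, forall b, c (g b) = h b - p (a' b).
  apply: (factor_through_surjection g (h \- (p \o a')) g_surj).
  by move=> _ /exact_B [x <-]; rewrite /= a'f pa subrr.
have [d pd] := SC P p c p_surj.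
by exists (a' \+ (d \o g)) => b /=; rewrite linearD pd cg addrC subrK.
Qed.

Theorem mainTheorem2 (R : pzRingType) (M P : rmodType R) (p : {linear P -> M}) :
  surjective p -> projective P -> injective_module P ->
  forall (A B C : rmodType R) (f : {linear A -> B}) (g : {linear B -> C}),
    short_exact f g -> subprojective A M -> subprojective C M ->
    subprojective B M.
Proof.
move=> p_surj P_proj P_inj A B C f g fg_exact SA SC.
apply: (subprojective_of_factor_through_projective p P_proj).
exact: (factor_through_injective_cover p_surj P_inj fg_exact SA SC).
Qed.
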